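(* Let $\Gamma$ be a single edge $ab$ with label $m\ge3$, let $X$ be the Cayley complex of the standard presentation of $A_\Gamma$, and let $\Lambda\subset X$ be a hypergraph. Suppose $\gamma$ is an edge-path in $X$ whose first and last edges are vertices of $\Lambda$ and none of whose other edges is a vertex of $\Lambda$. Then the word read along $\gamma$ is not of the form $a^kba^l$, $b^kab^l$, or $a^kb^l$ with $k,l\in\mathbb{Z}\setminus\{0\}$.
   Context: For a labelled edge $ab$ with label $m$, $A_\Gamma=\langle a,b\mid p_m(a,b)=p_m(b,a)\rangle$ where $p_m(a,b)$ is the alternating word $aba\cdots$ of length $m$. The Cayley complex $X$ has vertex set $A_\Gamma$, a directed edge labelled $s$ from $g$ to $gs$ for $s\in\{a,b\}$, and a $2m$-gon $2$-cell glued along each closed path reading $p_m(a,b)p_m(b,a)^{-1}$. The word read along an edge-path records the label of each edge with exponent $+1$ or $-1$ according to whether it is traversed along or against its direction. Two edges of the boundary of a $2m$-gon are opposite if they are at distance $m-1$ along the boundary. A hypergraph in $X$ is a connected component of the graph whose vertices are the edges of $X$ and which has, for each $2$-cell $R$ and each pair of opposite edges of $\partial R$, an edge joining them. *)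

From mathcomp Require Import all_boot all_order all_algebra.
Set Implicit Arguments. Unset Strict Implicit. Unset Printing Implicit Defensive.

(* Generators: true = a, false = b.  A letter is (generator, exponent),
   exponent true = +1, false = -1.  Words over {a,b}^{+-1}. *)
Definition letter := (bool * bool)%type.
Definition word := seq letter.

Definition linv (x : letter) : letter := (x.1, ~~ x.2).
Definition winv (w : word) : word := rev (map linv w).

(* p_m(x, y) = x y x ... (length m), x a generator *)
Definition palt (m : nat) (x : bool) : word :=
  [seq (if odd i then ~~ x else x, true) | i <- iota 0 m].

Definition relator (m : nat) : word := palt m true ++ winv (palt m false).

(* Equality in A_Gamma = <a,b | p_m(a,b) = p_m(b,a)>: the congruence on
   words generated by free reduction and the defining relation. *)
Inductive weq (m : nat) : word -> word -> Prop :=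
| weq_refl w : weq m w w
| weq_sym u v : weq m u v -> weq m v u
| weq_trans u v w : weq m u v -> weq m v w -> weq m u w
| weq_free u v x : weq m (u ++ [:: x; linv x] ++ v) (u ++ v)
| weq_rel u v : weq m (u ++ palt m true ++ v) (u ++ palt m false ++ v).

(* An edge of the Cayley complex X: (g, s) is the edge labelled s from g to gs;
   g is given by a representative word. *)
Definition edge := (word * bool)%type.
Definition edge_eq (m : nat) (e e' : edge) : Prop := e.2 = e'.2 /\ weq m e.1 e'.1.

Definition path_edge (g w : word) (i : nat) : edge :=
  let x := nth (true, true) w i in
  let gi := g ++ take i w in
  if x.2 then (gi, x.1) else (gi ++ [:: (x.1, false)], x.1).

(* The 2-cell based at g has boundary the closed path from g reading the relator;
   its i-th boundary edge: *)
Definition cell_edge (m : nat) (g : word) (i : nat) : edge := path_edge g (relator m) i.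

(* Opposite edges of the 2m-gon: e_i and e_{i+m} (m-1 edges between them). *)
Definition hadj (m : nat) (e e' : edge) : Prop :=
  exists g i, i < m /\ edge_eq m e (cell_edge m g i) /\ edge_eq m e' (cell_edge m g (i + m)).

(* Same hypergraph: connected in the graph on edges of X generated by
   opposite-edge pairs (edges being identified up to equality in X). *)
Inductive hconn (m : nat) : edge -> edge -> Prop :=
| hconn_eq e e' : edge_eq m e e' -> hconn m e e'
| hconn_adj e e' : hadj m e e' -> hconn m e e'
| hconn_sym e e' : hconn m e e' -> hconn m e' e
| hconn_trans e1 e2 e3 : hconn m e1 e2 -> hconn m e2 e3 -> hconn m e1 e3.

Definition gpow (s : bool) (k : int) : word :=
  match k with
  | Posz n => nseq n (s, true)
  | Negz n => nseq n.+1 (s, false)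
  end.

From mathcomp Require Import all_boot all_order all_algebra ring zify.
Import GRing.Theory.
Set Implicit Arguments. Unset Strict Implicit. Unset Printing Implicit Defensive.

(* Let R be a commutative ring in which m = 0 (in the end R = Z/m).
   The affine maps x |-> +-x + t of R form a dihedral group, and sending a and b
   to the reflections x |-> -x and x |-> 1 - x defines a homomorphism from A_Gamma
   to it: both sides of p_m(a,b) = p_m(b,a) map to the same affine map because
   m = 0 in R.  To the edge of X from g labelled s we attach the reflection
   g s g^-1, recorded by its "mirror" c such that g s g^-1 is x |-> c - x.  Two
   opposite edges of a 2-cell have the same mirror, hence the mirror is constant
   along every hypergraph.  For an edge-path from g reading w whose first and
   last edges lie in one hypergraph, cancelling g shows that the reflection of
   the first letter of w equals the conjugate of the reflection of its last
   letter by w.  For the three word shapes of the statement this identity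
   forces 2 = 0 in R, which is false in Z/m when m >= 3. *)

Lemma size_palt n x : size (palt n x) = n.
Proof. by rewrite /palt size_map size_iota. Qed.

Lemma palt_S n x : palt n.+1 x = (x, true) :: palt n (~~ x).
Proof.
rewrite /palt /= -[1]/(1 + 0) iotaDl -map_comp; congr cons.
by apply: eq_map => i /=; case: (odd i); case: x.
Qed.

Lemma nth_palt n x i d :
  i < n -> nth d (palt n x) i = (if odd i then ~~ x else x, true).
Proof. by move=> hi; rewrite /palt (nth_map 0) ?size_iota // nth_iota. Qed.

Lemma take_palt n x i : i <= n -> take i (palt n x) = palt i x.
Proof. by move=> hi; rewrite /palt -map_take take_iota (minn_idPl hi). Qed.

Lemma winv_palt n x :
  winv (palt n x) = [seq (l.1, false) | l <- palt n (if odd n then x else ~~ x)].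
Proof.
apply: (@eq_from_nth _ (true, true)).
  by rewrite /winv size_rev !size_map.
rewrite /winv size_rev size_map size_palt => i hi.
rewrite nth_rev; last by rewrite size_map size_palt.
rewrite size_map size_palt (nth_map (true, true)); last by rewrite size_palt; lia.
rewrite (nth_map (true, true)) ?size_palt //; last lia.
rewrite !nth_palt //; last lia.
by rewrite /linv oddB //=; case: (odd n); case: (odd i); case: x.
Qed.

(* p_n(x, y) contains uphalf n letters x and n./2 letters y. *)
Lemma uphalf_addhalf n : uphalf n + n./2 = n.
Proof. by rewrite uphalf_half -addnA addnn odd_double_half. Qed.

Local Open Scope ring_scope.

Section Dihedral.
Variable R : comNzRingType.

Definition sgn (e : bool) : R := if e then 1 else -1.

Lemma sgn_eq a b : sgn (a == b) = sgn a * sgn b.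
Proof. by case: a; case: b; rewrite /sgn /= ?mulr1 ?mul1r ?mulrNN ?mulr1. Qed.

Lemma sgnK e : sgn e * sgn e = 1.
Proof. by case: e; rewrite /sgn ?mulr1 ?mulrNN ?mulr1. Qed.

(* (e, t) stands for the affine map x |-> sgn e * x + t of R; amul is
   composition (amul p q applies q first) and aff1 the identity. *)
Definition aff := (bool * R)%type.
Definition aff1 : aff := (true, 0).
Definition amul (p q : aff) : aff := (p.1 == q.1, sgn p.1 * q.2 + p.2).

Lemma amulA p q r : amul p (amul q r) = amul (amul p q) r.
Proof.
by case: p q r => [[] a] [[] b] [[] c]; rewrite /amul /sgn /=; congr pair; ring.
Qed.

Lemma amul1a p : amul aff1 p = p.
Proof. by case: p => [[] a]; rewrite /amul /sgn /=; congr pair; ring. Qed.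

Lemma amula1 p : amul p aff1 = p.
Proof. by case: p => [[] a]; rewrite /amul /sgn /=; congr pair; ring. Qed.

(* Exponents are irrelevant because reflections are involutions. *)
Definition gen_aff (s : bool) : aff := (false, if s then 0 else 1).
Definition word_aff (w : word) : aff :=
  foldr (fun x p => amul (gen_aff x.1) p) aff1 w.

Lemma gen_affK s : amul (gen_aff s) (gen_aff s) = aff1.
Proof. by case: s; rewrite /amul /sgn /=; congr pair; ring. Qed.

Lemma word_aff_cat u v : word_aff (u ++ v) = amul (word_aff u) (word_aff v).
Proof. by elim: u => [|x u IH] /=; rewrite ?amul1a // IH amulA. Qed.

Lemma word_aff_letter x : word_aff [:: x] = gen_aff x.1.
Proof. exact: amula1. Qed.

Lemma word_aff_relabel (f : letter -> letter) w :
  (forall x, (f x).1 = x.1) -> word_aff (map f w) = word_aff w.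
Proof. by move=> hf; elim: w => [|x w IH] //=; rewrite IH hf. Qed.

Lemma word_aff_nseq n x :
  word_aff (nseq n x) = if odd n then gen_aff x.1 else aff1.
Proof.
elim: n => [|n IH] //=; rewrite -/(word_aff (nseq n x)) IH.
by case: (odd n); rewrite /= ?gen_affK ?amula1.
Qed.

Lemma word_aff_palt n x :
  word_aff (palt n x) = (~~ odd n, if x then - (n./2)%:R else (uphalf n)%:R).
Proof.
elim: n x => [|n IH] x; first by case: x; rewrite /= ?oppr0.
rewrite palt_S /= IH; case: x; rewrite /amul /sgn /= mulN1r.
  by rewrite addr0; case: (odd n).
by rewrite opprK natr1; case: (odd n).
Qed.

(* The mirror of p and s: p r_s p^-1 is the reflection x |-> mirror p s - x,
   where r_s = gen_aff s.  The mirror of an edge (g, s) of X is that of the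
   reflection g s g^-1. *)
Definition mirror (p : aff) (s : bool) : R :=
  2 * p.2 + sgn p.1 * (if s then 0 else 1).
Definition edge_mirror (e : edge) : R := mirror (word_aff e.1) e.2.

Lemma mirror_amul p q s : mirror (amul p q) s = sgn p.1 * mirror q s + 2 * p.2.
Proof. by rewrite /mirror /amul /= sgn_eq; ring. Qed.

(* (p r_s) r_s (p r_s)^-1 = p r_s p^-1: appending s to p keeps the s-mirror. *)
Lemma mirror_amul_gen p s : mirror (amul p (gen_aff s)) s = mirror p s.
Proof. by case: p => e c; case: s; case: e; rewrite /mirror /amul /sgn /=; ring. Qed.

Lemma mirror_amul_inj p q q' s s' :
  mirror (amul p q) s = mirror (amul p q') s' -> mirror q s = mirror q' s'.
Proof.
rewrite !mirror_amul => /addIr /(congr1 (fun x => sgn p.1 * x)).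
by rewrite !mulrA sgnK !mul1r.
Qed.

Lemma edge_mirror_path g w i :
  edge_mirror (path_edge g w i) =
  mirror (word_aff (g ++ take i w)) (nth (true, true) w i).1.
Proof.
rewrite /path_edge; case: (nth _ w i) => s [] //=.
by rewrite /edge_mirror /= word_aff_cat word_aff_letter mirror_amul_gen.
Qed.

Section Relation.
Variable m : nat.
Hypothesis charR : m%:R = 0 :> R.

(* The translation parts of p_m(a, b) and p_m(b, a) agree when m = 0. *)
Lemma halves_sum0 : (uphalf m)%:R = - (m./2)%:R :> R.
Proof. by apply/eqP; rewrite -subr_eq0 opprK -natrD uphalf_addhalf charR. Qed.

Lemma word_aff_weq u v : weq m u v -> word_aff u = word_aff v.
Proof.
elim=> [//|_ _ _ ->//|_ _ _ _ -> _ ->//|u0 v0 x|u0 v0]; rewrite !word_aff_cat.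
  by rewrite /= amula1 /linv /= gen_affK amul1a.
by rewrite !word_aff_palt halves_sum0.
Qed.

Lemma edge_mirror_eq e e' : edge_eq m e e' -> edge_mirror e = edge_mirror e'.
Proof.
by case: e e' => [v s] [v' s'] [/= -> h]; rewrite /edge_mirror /= (word_aff_weq h).
Qed.

Lemma cell_edge_lo g i : (i < m)%N ->
  edge_mirror (cell_edge m g i) =
  mirror (amul (word_aff g) (word_aff (palt i true))) (~~ odd i).
Proof.
move=> hi; rewrite /cell_edge edge_mirror_path /relator.
rewrite takel_cat ?size_palt; last lia.
rewrite nth_cat size_palt hi nth_palt // take_palt; last lia.
by rewrite word_aff_cat; case: (odd i).
Qed.

Lemma cell_edge_hi g i : (i < m)%N ->
  edge_mirror (cell_edge m g (i + m)) =
  mirror (amul (word_aff g)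
            (amul (word_aff (palt m true)) (word_aff (palt i (~~ odd m)))))
         (if odd i then odd m else ~~ odd m).
Proof.
move=> hi; rewrite /cell_edge edge_mirror_path /relator.
rewrite take_cat nth_cat size_palt ltnNge leq_addl /= addnK winv_palt.
rewrite -map_take take_palt; last lia.
rewrite (nth_map (true, true)) ?size_palt // nth_palt // !word_aff_cat.
by rewrite word_aff_relabel //=; case: (odd i); case: (odd m).
Qed.

(* Opposite edges of a 2-cell define the same reflection: after cancelling g,
   this is an identity between the explicit values of word_aff_palt that holds
   because odd m + 2 * m./2 = m = 0 in R. *)
Lemma opposite_edges_mirror g i : (i < m)%N ->
  edge_mirror (cell_edge m g i) = edge_mirror (cell_edge m g (i + m)).
Proof.
move=> hi; rewrite cell_edge_lo // cell_edge_hi // !mirror_amul; congr (_ * _ + _).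
have hm : (odd m)%:R + (m./2)%:R * 2 = 0 :> R.
  by rewrite -charR -{3}(odd_double_half m) -muln2 natrD natrM.
rewrite !word_aff_palt uphalf_half.
move: hm; case: (odd i); case: (odd m) => /= hm; rewrite /mirror /sgn /=;
  apply/eqP; rewrite -subr_eq0; apply/eqP; apply: etrans hm; rewrite ?natrD; ring.
Qed.

Lemma hconn_mirror e e' : hconn m e e' -> edge_mirror e = edge_mirror e'.
Proof.
elim=> [? ? /edge_mirror_eq //|e1 e2 [g [i [hi [h1 h2]]]]|_ _ _ ->//|_ _ _ _ -> _ ->//].
by rewrite (edge_mirror_eq h1) (edge_mirror_eq h2) opposite_edges_mirror.
Qed.

Lemma path_ends_mirror g w : (0 < size w)%N ->
  hconn m (path_edge g w 0) (path_edge g w (size w).-1) ->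
  mirror aff1 (head (true, true) w).1 = mirror (word_aff w) (last (true, true) w).1.
Proof.
case/lastP: w => [//|u x] _ /hconn_mirror.
rewrite !edge_mirror_path take0 cats0 size_rcons /= -cats1 take_size_cat //.
rewrite (nth_cat _ _ _ (size u)) ltnn subnn nth0 /= => ends_eq.
apply: (@mirror_amul_inj (word_aff g)); rewrite amula1 ends_eq last_cat /=.
rewrite -word_aff_cat catA [word_aff (_ ++ [:: x])]word_aff_cat.
by rewrite word_aff_letter mirror_amul_gen.
Qed.

End Relation.

End Dihedral.

Local Close Scope ring_scope.

Lemma last_nseqS n (x y : letter) : last y (nseq n.+1 x) = x.
Proof. by elim: n y => //= n IH y; rewrite IH. Qed.

Lemma gpow_nonzero s (k : int) : k != 0 -> exists n e, gpow s k = nseq n.+1 (s, e).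
Proof. by case: k => [[|n]|n] //= _; do 2 eexists. Qed.

Definition forbidden_shape (w : word) : Prop :=
  exists k l : int, k != 0 /\ l != 0 /\
    (w = gpow true k ++ [:: (false, true)] ++ gpow true l
     \/ w = gpow false k ++ [:: (true, true)] ++ gpow false l
     \/ w = gpow true k ++ gpow false l).

Lemma two_eq0_of (R : comNzRingType) (c x y : R) :
  x = y -> (2 = c * (y - x) -> 2 = 0 :> R)%R.
Proof. by move=> -> ->; rewrite subrr mulr0. Qed.

(* For a forbidden word the two mirrors of path_ends_mirror differ by +-1 or
   +-2 (in each case according to the parities of the two exponents), so they
   can only agree when 2 = 0. *)
Lemma forbidden_mirrors (R : comNzRingType) w : forbidden_shape w ->
  mirror (aff1 R) (head (true, true) w).1 =
  mirror (word_aff R w) (last (true, true) w).1 ->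
  (2 = 0 :> R)%R.
Proof.
move=> [k [l [hk [hl shape]]]].
case: shape => [|[|]] ->;
  [ have [n1 [e1 ->]] := gpow_nonzero true hk; have [n2 [e2 ->]] := gpow_nonzero true hl
  | have [n1 [e1 ->]] := gpow_nonzero false hk; have [n2 [e2 ->]] := gpow_nonzero false hl
  | have [n1 [e1 ->]] := gpow_nonzero true hk; have [n2 [e2 ->]] := gpow_nonzero false hl ];
rewrite !last_cat last_nseqS !word_aff_cat !word_aff_nseq ?word_aff_letter /=;
case: (odd n1); case: (odd n2); rewrite /mirror /amul /gen_aff /aff1 /sgn /= => h;
first [ by apply: (two_eq0_of (c := 1%R) h); ring
      | by apply: (two_eq0_of (c := (-1)%R) h); ring
      | by apply: (two_eq0_of (c := 2%R) h); ring
      | by apply: (two_eq0_of (c := (-2)%R) h); ring ].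
Qed.

Lemma two_neq0_Zp m : 3 <= m -> (2 != 0 :> 'Z_m)%R.
Proof.
move=> hm; apply/eqP => two0; have hm1 : 1 < m by lia.
by move: (val_Zp_nat hm1 2); rewrite two0 /= modn_small //; lia.
Qed.

(* The hypergraph Lambda is the component {e | hconn m e0 e} of the edge e0. *)
Theorem lemma4p4 (m : nat) (hm : 3 <= m) (e0 : edge) (g w : word)
  (hw : 0 < size w)
  (hfirst : hconn m e0 (path_edge g w 0))
  (hlast : hconn m e0 (path_edge g w (size w).-1))
  (hmid : forall i, 0 < i -> i < (size w).-1 -> ~ hconn m e0 (path_edge g w i)) :
  ~ (exists k l : int, k != 0 /\ l != 0 /\
       (w = gpow true k ++ [:: (false, true)] ++ gpow true l
        \/ w = gpow false k ++ [:: (true, true)] ++ gpow false l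
        \/ w = gpow true k ++ gpow false l)).
Proof.
move=> forbidden; have hm1 : 1 < m by lia.
have ends_connected := hconn_trans (hconn_sym hfirst) hlast.
have same_mirror := path_ends_mirror (pchar_Zp hm1) hw ends_connected.
by move: (two_neq0_Zp hm); rewrite (forbidden_mirrors forbidden same_mirror) eqxx.
Qed.
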